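(* Let $n \geq 1$, $i \in \mathbb{Z}_{\geq 1}$ and $B \subseteq [n]$. Then $\mathrm{Cons}(V_B, i) = \mathrm{Gov}(V_B, i)$.
   Context: $V_{[n]} = \mathbb{F}_2^n$ with basis $e_1,\dots,e_n$ and dual basis $\chi_1,\dots,\chi_n$. For $C \subseteq [n]$ and $i \geq 1$, $\widetilde{\mathrm{Multi}}(V_C, i)$ is the span (inside the space of multilinear maps $V_{[n]}^i \to \mathbb{F}_2$) of $\chi_{\tau(1)}\otimes\cdots\otimes\chi_{\tau(i)}$ over injective maps $\tau: \{1,\dots,i\} \to C$, where $(\chi_{h_1}\otimes\cdots\otimes\chi_{h_i})(\sigma_1,\dots,\sigma_i) = \prod_s\chi_{h_s}(\sigma_s)$. For $b \in \widetilde{\mathrm{Multi}}(V_C,i)$ and $j \in C$, $b(e_j, -)$ lies in $\widetilde{\mathrm{Multi}}(V_{C\setminus\{j\}}, i-1)$. Consistent tensors $\mathrm{Cons}(V_C, i) \subseteq \widetilde{\mathrm{Multi}}(V_C,i)$ are defined recursively: $\mathrm{Cons}(V_C,1)$ is the span of $\{\chi_x : x \in C\}$; $\mathrm{Cons}(V_C,2)$ consists of the $b$ with $b(\sigma_1,\sigma_2) = b(\sigma_2,\sigma_1)$ for all $\sigma_1,\sigma_2$; $\mathrm{Cons}(V_C,3)$ consists of the $b$ such that $b(e_j,-) \in \mathrm{Cons}(V_{C\setminus\{j\}},2)$ for all $j \in C$ and $b(\sigma_1,\sigma_2,\sigma_3)+b(\sigma_3,\sigma_1,\sigma_2)+b(\sigma_2,\sigma_3,\sigma_1)=0$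 for all $\sigma_1,\sigma_2,\sigma_3 \in \{e_1,\dots,e_n\}$; for $i \geq 4$, $\mathrm{Cons}(V_C,i)$ consists of the $b$ such that $b(e_j,-) \in \mathrm{Cons}(V_{C\setminus\{j\}}, i-1)$ for all $j \in C$ and $b(e_{j_1}, e_{j_2}, -) = b(e_{j_2}, e_{j_1}, -)$ for all distinct $j_1, j_2 \in C$. Governing tensors: for $A \subseteq [n]$ with $\#A = i \geq 2$ and $x \in A$, $\phi_{(A,x)} = \sum_\tau \chi_{\tau(1)}\otimes\cdots\otimes\chi_{\tau(i)}$ over bijections $\tau:\{1,\dots,i\}\to A$ with $\tau(i-1)=x$ or $\tau(i)=x$; for $A=\{x\}$, $\phi_{(A,x)} = \chi_x$. $\mathrm{Gov}(V_C, i)$ is the span of $\phi_{(A,x)}$ over $A \subseteq C$ with $\#A = i$ and $x \in A$. *)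

From HB Require Import structures.
From mathcomp Require Import all_boot all_order all_algebra.
Set Implicit Arguments. Unset Strict Implicit. Unset Printing Implicit Defensive.
Import GRing.Theory.
Local Open Scope ring_scope.

Section Tensors.
Variable n : nat.

Definition V := 'rV['F_2]_n.
(* standard basis e_j and dual basis chi_j (indices 0-based: 'I_n) *)
Definition e (j : 'I_n) : V := delta_mx 0 j.
Definition chi (j : 'I_n) (v : V) : 'F_2 := v 0 j.

(* Maps V^i -> F_2 (arguments as i-tuples of vectors); a finite-dimensional
   F_2-vector space.  All spaces below are spans inside it of multilinear maps. *)
Definition tensor (i : nat) := {ffun i.-tuple V -> ('F_2)^o}.

Definition elem (i : nat) (h : i.-tuple 'I_n) : tensor i :=
  [ffun s : i.-tuple V => \prod_(k < i) chi (tnth h k) (tnth s k)].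

(* injective maps tau : {1..i} -> C  <->  duplicate-free i-tuples with entries in C *)
Definition injTo (i : nat) (C : {set 'I_n}) : seq (i.-tuple 'I_n) :=
  filter (fun h : i.-tuple 'I_n => uniq h && all (fun x => x \in C) h)
    (enum {: i.-tuple 'I_n}).

Definition Multi (C : {set 'I_n}) (i : nat) : {vspace tensor i} :=
  <<[seq elem h | h <- injTo i C]>>%VS.

Definition contr (i : nat) (b : tensor i.+1) (v : V) : tensor i :=
  [ffun t : i.-tuple V => b [tuple of v :: t]].

Definition Cons1 (C : {set 'I_n}) (b : tensor 1) : Prop :=
  b \in <<[seq elem [tuple x] | x <- enum C]>>%VS.

Definition Cons2 (C : {set 'I_n}) (b : tensor 2) : Prop :=
  b \in Multi C 2 /\
  forall s1 s2 : V, b [tuple s1; s2] = b [tuple s2; s1].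

Definition Cons3 (C : {set 'I_n}) (b : tensor 3) : Prop :=
  [/\ b \in Multi C 3,
      (forall j, j \in C -> Cons2 (C :\ j) (contr b (e j))) &
      forall j1 j2 j3 : 'I_n,
        b [tuple e j1; e j2; e j3] + b [tuple e j3; e j1; e j2]
          + b [tuple e j2; e j3; e j1] = 0].

Fixpoint Cons4 (k : nat) (C : {set 'I_n}) (b : tensor k.+4) : Prop :=
  let prev := match k return {set 'I_n} -> tensor k.+3 -> Prop with
              | 0 => Cons3
              | k'.+1 => @Cons4 k'
              end in
  [/\ b \in Multi C k.+4,
      (forall j, j \in C -> prev (C :\ j) (contr b (e j))) &
      forall j1 j2 : 'I_n, j1 \in C -> j2 \in C -> j1 != j2 ->
        contr (contr b (e j1)) (e j2) = contr (contr b (e j2)) (e j1)].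

(* Cons(V_C, i), i >= 1 (for i = 0 it is not defined in the paper; we put False) *)
Definition Consistent (C : {set 'I_n}) (i : nat) : tensor i -> Prop :=
  match i return tensor i -> Prop with
  | 0 => fun _ => False
  | 1 => Cons1 C
  | 2 => Cons2 C
  | 3 => Cons3 C
  | k.+4 => @Cons4 k C
  end.

(* governing tensor phi_(A,x) in degree i = #A: sum over bijections
   tau : {1..i} -> A (duplicate-free i-tuples whose entry set is A) with
   x among the last two entries tau(i-1), tau(i).  For i = 1, drop 0 h = h,
   so the condition is tau(1) = x and phi_({x},x) = chi_x. *)
Definition phi (i : nat) (A : {set 'I_n}) (x : 'I_n) : tensor i :=
  \sum_(h : i.-tuple 'I_n | uniq h && ([set y in h] == A) && (x \in drop i.-2 h))
     elem h.

Definition Gov (C : {set 'I_n}) (i : nat) : {vspace tensor i} :=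
  <<[seq phi i A x | A <- [seq A : {set 'I_n} <- enum (powerset C) | #|A| == i], x <- enum A]>>%VS.

End Tensors.

From HB Require Import structures.
From mathcomp Require Import all_boot all_order all_algebra.
From mathcomp Require Import ring.
Set Implicit Arguments. Unset Strict Implicit. Unset Printing Implicit Defensive.
Import GRing.Theory.
Local Open Scope ring_scope.

(* Every tensor in question lies in the span of the elementary tensors, where
   it is determined by its coefficients on tuples of basis vectors.  Gov(V_C, i)
   consists of those b whose coefficient at an injective tau with image A is
   W(A, tau(i-1)) + W(A, tau(i)) for a weight W; contraction, symmetry and the
   cyclic relation visibly preserve this shape.  Conversely, by induction on i
   the contractions b(e_j, -) have such weights D(A, j, .), so that
   b(tau) = D(A, j, x) + D(A, j, y) with j = tau(1) and x, y the last two
   entries.  The cyclic relation (i = 3), resp. the exchange of the first two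
   arguments (i >= 4, where D(A, j, x) + D(A, j, y) becomes independent of j),
   makes this a coboundary w(x) + w(y) over F_2, and w is the required weight. *)

Lemma span_ind (K : fieldType) (vT : vectType K) (P : vT -> Prop) (X : seq vT) :
  P 0 -> (forall a u v, P u -> P v -> P (a *: u + v)) -> {in X, forall v, P v} ->
  forall v, v \in <<X>>%VS -> P v.
Proof.
move=> P0 PZD PX v /(@coord_span _ _ _ (in_tuple X)) ->.
apply: (big_ind P) => // [u w Pu Pw|k _]; first by have := PZD 1 u w Pu Pw; rewrite scale1r.
by have := PZD (coord (in_tuple X) k v) _ 0 (PX _ (mem_nth 0 (ltn_ord k))) P0; rewrite addr0.
Qed.

Lemma big_set_seq (R : Type) (idx : R) (op : Monoid.com_law idx) (T : finType)
    (s : seq T) (F : T -> R) :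
  uniq s -> \big[op/idx]_(x in [set x in s]) F x = \big[op/idx]_(x <- s) F x.
Proof. by move=> us; rewrite big_uniq //; apply: eq_bigl => x; rewrite inE. Qed.

Lemma set_seq_card_eq (T : finType) (A : {set T}) (s : seq T) :
  uniq s -> {subset s <= A} -> #|A| = size s -> [set x in s] = A.
Proof.
move=> us sA cA; apply/eqP; rewrite eqEcard cA cardsE (card_uniqP us) leqnn andbT.
by apply/subsetP => z; rewrite inE => /sA.
Qed.

Lemma sum_mul_mem (R : pzSemiRingType) (T : finType) (A : {set T}) (s : seq T)
    (F : T -> R) :
  uniq s -> {subset s <= A} -> \sum_(x in A) F x * (x \in s)%:R = \sum_(x <- s) F x.
Proof.
move=> us sA; rewrite big_uniq // big_mkcond [RHS]big_mkcond /=; apply: eq_bigr => x _.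
by have [/sA->|] := boolP (x \in s); rewrite ?mulr1 ?mulr0 ?if_same.
Qed.

Lemma perm_set (T : finType) (s t : seq T) : perm_eq s t -> [set x in s] = [set x in t].
Proof. by move=> st; apply/setP => x; rewrite !inE (perm_mem st). Qed.

Lemma set_cons (T : finType) (x : T) (s : seq T) : [set y in x :: s] = x |: [set y in s].
Proof. by apply/setP => y; rewrite !inE. Qed.

Lemma exists_notin (T : finType) (A : {set T}) (s : seq T) :
  (size s < #|A|)%N -> exists2 q, q \in A & q \notin s.
Proof.
move=> sA; apply/exists_inP; apply: contraTT sA => /exists_inPn As; rewrite -leqNgt.
apply: leq_trans (card_size s); apply/subset_leq_card/subsetP => q /As.
by rewrite negbK.
Qed.

Lemma drop_last2 (T : Type) (s : seq T) k :
  size s = k.+2 -> exists u v, drop k s = [:: u; v].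
Proof.
elim: k s => [|k IH] [|a s] //= [sz]; last exact: IH.
by case: s sz => [|u [|]] //; exists a, u.
Qed.

Lemma tuple_of_set_ending (T : finType) k (A : {set T}) x y :
  #|A| = k.+2 -> x \in A -> y \in A -> x != y ->
  exists r : k.+2.-tuple T, [/\ uniq r, [set z in r] = A & drop k r = [:: x; y]].
Proof.
move=> cA xA yA xy; set B := A :\ y :\ x.
have cB : #|B| = k.
  move: cA; rewrite (cardsD1 y) (cardsD1 x (A :\ y)) yA !inE xy xA.
  by rewrite !add1n => -[].
have sz : size (enum B ++ [:: x; y]) == k.+2 by rewrite size_cat -cardE cB addn2.
exists (Tuple sz); split => /=.
- by rewrite cat_uniq enum_uniq /= !mem_enum !inE !eqxx /= !andbF xy.
- apply/setP => z; rewrite !inE mem_cat mem_enum !inE.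
  have [->|zx] := eqVneq z x; first by rewrite xA orbT.
  by have [->|zy] := eqVneq z y; rewrite ?yA ?orbT ?orbF.
- by rewrite drop_size_cat // -cardE.
Qed.

Section PairPotential.
Variables (T : finType) (R : nzRingType) (A : {set T}) (D : T -> T -> R).
Hypothesis char2 : 2 \in [pchar R].

Definition pair_potential (w : T -> R) :=
  forall j x y, uniq [:: j; x; y] -> {subset [:: j; x; y] <= A} ->
    D j x + D j y = w x + w y.

Lemma pair_potential_card3 :
  #|A| = 3 ->
  (forall j x y, uniq [:: j; x; y] -> {subset [:: j; x; y] <= A} ->
     (D j x + D j y) + (D y j + D y x) + (D x y + D x j) = 0) ->
  exists w, pair_potential w.
Proof.
move=> cA cyc; exists (fun x => \sum_(z in A) (z != x)%:R * D x z) => j x y ujxy jxyA.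
rewrite -(set_seq_card_eq ujxy jxyA cA) !big_set_seq //= !big_cons !big_nil !eqxx.
move: (ujxy); rewrite /= !inE !negb_or -!andbA => /and4P[jx jy xy _].
rewrite jx jy xy [y == x]eq_sym xy !mul1r !mul0r !addr0 !add0r.
have := cyc j x y ujxy jxyA; rewrite -addrA => /eqP; rewrite addr_eq0 oppr_pchar2 // => /eqP ->.
by rewrite addrC [D x y + _]addrC.
Qed.

(* The witness is w z := D p a0 + D p z for any p outside {a0, z}: the exchange
   property makes it independent of p, and the a0-terms cancel in characteristic 2. *)
Lemma pair_potential_card_gt3 :
  (3 < #|A|)%N ->
  (forall j1 j2 x y, uniq [:: j1; x; y] -> uniq [:: j2; x; y] ->
     {subset [:: j1; j2; x; y] <= A} -> D j1 x + D j1 y = D j2 x + D j2 y) ->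
  exists w, pair_potential w.
Proof.
move=> cA exch.
have /card_gt0P[a0 a0A] : (0 < #|A|)%N by apply: ltn_trans cA.
have /fin_all_exists[p pP] : forall z, exists q, (q \in A) && (q \notin [:: a0; z]).
  move=> z; have [q qA qn] := exists_notin (s := [:: a0; z]) (ltnW cA).
  by exists q; rewrite qA.
exists (fun z => D (p z) a0 + D (p z) z).
have wE z q : z \in A -> q \in A -> q \notin [:: a0; z] ->
    D (p z) a0 + D (p z) z = D q a0 + D q z.
  move=> zA qA qn; have [<-|a0z] := eqVneq a0 z; first by rewrite !addrr_pchar2.
  have /andP[pA pn] := pP z.
  by apply: exch; rewrite /= ?pn ?qn ?inE ?a0z // => v; rewrite !inE => /or4P[] /eqP->.
move=> j x y ujxy jxyA.
have [q qA] := exists_notin (s := [:: a0; x; y]) cA.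
rewrite !inE !negb_or => /and3P[qa0 qx qy].
have xA : x \in A by apply: jxyA; rewrite !inE eqxx orbT.
have yA : y \in A by apply: jxyA; rewrite !inE eqxx !orbT.
rewrite (wE x q) ?(wE y q) ?inE ?negb_or ?qa0 ?qx ?qy //.
rewrite addrACA addrr_pchar2 // add0r.
move: (ujxy); rewrite /= !inE !negb_or => /andP[_ /andP[xy _]].
apply: exch => //=; first by rewrite !inE !negb_or xy qx qy.
by move=> v; rewrite !inE => /or4P[] /eqP-> //; [apply: jxyA; rewrite inE eqxx].
Qed.

End PairPotential.

Section Tensors.
Variable n : nat.
Implicit Types (A C : {set 'I_n}).

Definition coef i (t : i.-tuple 'I_n) (b : tensor n i) : 'F_2 := b (map_tuple (@e n) t).

Fact coef_is_linear i t : linear_for *%R (@coef i t).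
Proof. by move=> a u v; rewrite /coef !ffunE. Qed.
HB.instance Definition _ i t :=
  GRing.isLinear.Build ('F_2)%type (tensor n i) ('F_2)%type *%R (@coef i t)
    (coef_is_linear t).

Lemma coefZ i t a (b : tensor n i) : coef t (a *: b) = a * coef t b.
Proof. exact: linearZ. Qed.

Lemma coef_elem i (h t : i.-tuple 'I_n) : coef t (elem h) = (h == t)%:R.
Proof.
rewrite /coef /elem ffunE; have [<-|ht] := eqVneq h t.
  by apply: big1 => k _; rewrite tnth_map /chi /e mxE !eqxx.
have [k hk] : exists k, tnth h k != tnth t k.
  apply/existsP; apply: contraR ht => /existsPn hkt; apply/eqP/eq_from_tnth => k.
  by apply/eqP; rewrite -[_ == _]negbK hkt.
by rewrite (bigD1 k) //= tnth_map /chi /e mxE eqxx /= (negbTE hk) mul0r.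
Qed.

Lemma mem_injTo i C (t : i.-tuple 'I_n) :
  (t \in injTo i C) = uniq t && all (fun x => x \in C) t.
Proof. by rewrite mem_filter mem_enum andbT. Qed.

Lemma cons_injTo i C j (t : i.-tuple 'I_n) :
  ([tuple of j :: t] \in injTo i.+1 C) = (j \in C) && (t \in injTo i (C :\ j)).
Proof.
have tCj : all (fun x => x \in C :\ j) t = (j \notin t) && all (fun x => x \in C) t.
  by rewrite -has_pred1 -all_predC -all_predI; apply: eq_all => x; rewrite !inE.
by rewrite !mem_injTo /= tCj; case: (j \in t); case: (j \in C); case: (uniq t).
Qed.

Lemma mem_Multi_elem i C (h : i.-tuple 'I_n) : h \in injTo i C -> elem h \in Multi C i.
Proof. by move=> hC; apply/memv_span/map_f. Qed.

Lemma Multi_expand i C (b : tensor n i) :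
  b \in Multi C i -> b = \sum_t coef t b *: elem t.
Proof.
move: b; apply: span_ind => [|a u v Pu Pv|_ /mapP[h _ ->]].
- by rewrite big1 // => t _; rewrite linear0 scale0r.
- rewrite [in LHS]Pu [in LHS]Pv scaler_sumr -big_split /=.
  by apply: eq_bigr => t _; rewrite linearP scalerDl scalerA.
rewrite (bigD1 h) //= coef_elem eqxx scale1r big1 ?addr0 // => t th.
by rewrite coef_elem eq_sym (negbTE th) scale0r.
Qed.

Lemma Multi_coef_eq0 i C (b : tensor n i) t :
  b \in Multi C i -> t \notin injTo i C -> coef t b = 0.
Proof.
move=> + tC; move: b; apply: span_ind => [|a u v Pu Pv|_ /mapP[h hC ->]].
- exact: linear0.
- by rewrite linearP /= Pu Pv mulr0 addr0.
by rewrite coef_elem; case: eqP => // eht; move: hC; rewrite eht (negbTE tC).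
Qed.

Lemma Multi_coef_inj i C (b1 b2 : tensor n i) :
  b1 \in Multi C i -> b2 \in Multi C i ->
  {in injTo i C, forall t, coef t b1 = coef t b2} -> b1 = b2.
Proof.
move=> b1C b2C eq12; rewrite (Multi_expand b1C) (Multi_expand b2C).
apply: eq_bigr => t _; congr (_ *: _).
have [/eq12 //|tC] := boolP (t \in injTo i C).
by rewrite !(Multi_coef_eq0 _ tC).
Qed.

Lemma coef_contr i (b : tensor n i.+1) j t :
  coef t (contr b (e j)) = coef [tuple of j :: t] b.
Proof. by rewrite /coef /contr ffunE; congr (b _); apply: val_inj. Qed.

Lemma Multi_contr i C (b : tensor n i.+1) j :
  b \in Multi C i.+1 -> contr b (e j) \in Multi (C :\ j) i.
Proof.
move: b; apply: span_ind => [|a u v Pu Pv|_ /mapP[+ + ->]].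
- by rewrite (_ : contr 0 _ = 0) ?mem0v //; apply/ffunP => s; rewrite !ffunE.
- rewrite (_ : contr _ _ = a *: contr u (e j) + contr v (e j)) ?memvD ?memvZ //.
  by apply/ffunP => s; rewrite !ffunE.
case/tupleP => x h; rewrite cons_injTo => /andP[_ hC].
have -> : contr (elem [tuple of x :: h]) (e j) = (x == j)%:R *: elem h.
  apply/ffunP => s; rewrite !ffunE big_ord_recl /= /chi /e mxE eqxx /=.
  by congr (_ * _); apply: eq_bigr => k _; rewrite !tnthS.
have [<-|_] := eqVneq x j; last by rewrite scale0r mem0v.
exact/memvZ/mem_Multi_elem.
Qed.

(* The coefficient description of Gov(V_C, i): [drop i.-2 t] lists the last two
   entries of t, or its only entry when i = 1. *)
Definition governed i C (b : tensor n i) : Prop :=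
  b \in Multi C i /\ exists W : {set 'I_n} -> 'I_n -> 'F_2,
    forall t, t \in injTo i C -> coef t b = \sum_(x <- drop i.-2 t) W [set y in t] x.

Lemma coef_phi i A x t :
  coef t (phi i A x) = (uniq t && ([set y in t] == A) && (x \in drop i.-2 t))%:R.
Proof.
rewrite /phi linear_sum /=; under eq_bigr do rewrite coef_elem.
case Pt: (uniq t && ([set y in t] == A) && (x \in drop i.-2 t)).
  by rewrite (bigD1 t) ?Pt //= eqxx big1 ?addr0 // => h /andP[_ /negbTE ->].
by apply: big1 => h; have [->|] := eqVneq h t; rewrite ?Pt.
Qed.

Lemma governed_of_Gov i C (b : tensor n i) : b \in Gov C i -> governed C b.
Proof.
move: b; apply: span_ind => [|a u v [uC [Wu Hu]] [vC [Wv Hv]]|_ /allpairsPdep[A [x [+ xA ->]]]].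
- by split; [exact: mem0v | exists (fun _ _ => 0) => t _; rewrite linear0 big1].
- split; first by rewrite memvD ?memvZ.
  exists (fun A x => a * Wu A x + Wv A x) => t tC.
  by rewrite linearP /= Hu // Hv // big_split /= mulr_sumr.
rewrite mem_filter mem_enum powersetE => /andP[cA AC].
split.
  apply: memv_suml => h /andP[/andP[uh /eqP hA] _]; apply: mem_Multi_elem.
  by rewrite mem_injTo uh /=; apply/allP => y yh; apply: (subsetP AC); rewrite -hA inE.
exists (fun B y => ((B == A) && (y == x))%:R) => t; rewrite mem_injTo coef_phi => /andP[ut _].
rewrite ut /=; case: eqP => _ /=; last by rewrite big1.
rewrite -(count_uniq_mem x (drop_uniq _ ut)) -sum1_count natr_sum big_mkcond /=.
by apply: eq_bigr => y _; case: (y == x).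
Qed.

Lemma Gov_governed i C (b : tensor n i) : b \in Gov C i <-> governed C b.
Proof.
split=> [|[bC [W HW]]]; first exact: governed_of_Gov.
set g := \sum_(A in powerset C | #|A| == i) \sum_(x in A) W A x *: phi i A x.
have gG : g \in Gov C i.
  apply: memv_suml => A /andP[AC cA]; apply: memv_suml => x xA.
  apply/memvZ/memv_span/(allpairs_f_dep (fun A x => phi i A x)).
    by rewrite mem_filter mem_enum AC cA.
  by rewrite mem_enum.
have [gC _] := governed_of_Gov gG.
suff -> : b = g by [].
apply: (Multi_coef_inj bC gC) => t tC; move: (tC); rewrite mem_injTo => /andP[ut tsC].
have tA : [set y in t] \in powerset C.
  by rewrite powersetE; apply/subsetP => y; rewrite inE => /(allP tsC).
rewrite HW // linear_sum /= (bigD1 [set y in t]) /=; last first.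
  by rewrite tA cardsE (card_uniqP ut) size_tuple eqxx.
rewrite [X in _ + X]big1 ?addr0; last first.
  move=> A /andP[_ At]; rewrite linear_sum big1 // => x _ /=.
  by rewrite coefZ coef_phi ut eq_sym (negbTE At) mulr0.
rewrite linear_sum -(@sum_mul_mem _ _ [set y in t] _ _ (drop_uniq _ ut)); last first.
  by move=> y /mem_drop yt; rewrite inE.
by apply: eq_bigr => x _; rewrite /= coefZ coef_phi ut eqxx.
Qed.

Lemma perm_injTo i C (s t : i.-tuple 'I_n) :
  perm_eq s t -> (s \in injTo i C) = (t \in injTo i C).
Proof. by move=> st; rewrite !mem_injTo (perm_uniq st) (perm_all _ st). Qed.

Lemma governed_coef_perm i C (b : tensor n i) (s t : i.-tuple 'I_n) :
  governed C b -> perm_eq s t -> perm_eq (drop i.-2 s) (drop i.-2 t) ->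
  coef s b = coef t b.
Proof.
move=> [bC [W HW]] st dst; have [sC|sC] := boolP (s \in injTo i C); last first.
  by rewrite !(Multi_coef_eq0 bC) -?(perm_injTo _ st).
by rewrite !HW -?(perm_injTo _ st) // (perm_big _ dst) (perm_set st).
Qed.

Lemma governed_contr m C (b : tensor n m.+3) j :
  j \in C -> governed C b -> governed (C :\ j) (contr b (e j)).
Proof.
move=> jC [bC [W HW]]; split; first exact: Multi_contr.
exists (fun A x => W (j |: A) x) => t tC.
by rewrite coef_contr HW ?cons_injTo ?jC //= set_cons.
Qed.

Lemma governed_swap k C (b : tensor n k.+4) j1 j2 :
  governed C b -> contr (contr b (e j1)) (e j2) = contr (contr b (e j2)) (e j1).
Proof.
move=> gb; have bC := gb.1.
rewrite (Multi_expand (Multi_contr _ (Multi_contr _ bC))).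
rewrite [RHS](Multi_expand (Multi_contr _ (Multi_contr _ bC))).
apply: eq_bigr => r _; rewrite !coef_contr; congr (_ *: _).
apply: (governed_coef_perm gb) => //=.
by rewrite (perm_catCA [:: j1] [:: j2] r).
Qed.

Lemma coef_pair (b : tensor n 2) x y : coef [tuple x; y] b = b [tuple e x; e y].
Proof. by rewrite /coef; congr (b _); apply: val_inj. Qed.

Lemma coef_triple (b : tensor n 3) x y z :
  coef [tuple x; y; z] b = b [tuple e x; e y; e z].
Proof. by rewrite /coef; congr (b _); apply: val_inj. Qed.

Lemma governed_cyclic C (b : tensor n 3) j1 j2 j3 : governed C b ->
  b [tuple e j1; e j2; e j3] + b [tuple e j3; e j1; e j2] + b [tuple e j2; e j3; e j1] = 0.
Proof.
move=> [bC [W HW]]; rewrite -!coef_triple.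
have rot1 : perm_eq [tuple j3; j1; j2] [tuple j1; j2; j3] by rewrite (perm_rot 2 [:: j1; j2; j3]).
have rot2 : perm_eq [tuple j2; j3; j1] [tuple j1; j2; j3] by rewrite (perm_rot 1 [:: j1; j2; j3]).
have [tC|tC] := boolP ([tuple j1; j2; j3] \in injTo 3 C); last first.
  by rewrite !(Multi_coef_eq0 bC) ?(perm_injTo _ rot1) ?(perm_injTo _ rot2) // !addr0.
rewrite !HW ?(perm_injTo _ rot1) ?(perm_injTo _ rot2) //=.
rewrite (perm_set rot1) (perm_set rot2) !big_cons !big_nil !addr0.
set w := W _; have w2 (a : 'F_2) : a + a = 0 by exact/addrr_pchar2/pchar_Fp.
have -> : w j2 + w j3 + (w j1 + w j2) + (w j3 + w j1)
    = (w j1 + w j1) + (w j2 + w j2) + (w j3 + w j3) by ring.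
by rewrite !w2.
Qed.

Lemma contr_governed_weights m C (b : tensor n m.+3) :
  (forall j, j \in C -> governed (C :\ j) (contr b (e j))) ->
  exists D : {set 'I_n} -> 'I_n -> 'I_n -> 'F_2, forall t, t \in injTo m.+3 C ->
    coef t b = \sum_(x <- drop m.+1 t) D [set y in t] (thead t) x.
Proof.
move=> gcontr.
have /fin_all_exists[W HW] : forall j, exists W : {set 'I_n} -> 'I_n -> 'F_2,
    j \in C -> forall t, t \in injTo m.+2 (C :\ j) ->
      coef t (contr b (e j)) = \sum_(x <- drop m t) W [set y in t] x.
  move=> j; have [/gcontr[_ [W HW]]|_] := boolP (j \in C); first by exists W.
  by exists (fun _ _ => 0).
exists (fun A j => W j (A :\ j)); case/tupleP => j t; rewrite cons_injTo => /andP[jC tC].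
have jt : j \notin [set y in t].
  move: (tC); rewrite mem_injTo inE => /andP[_ /allP tCj].
  by apply/negP => /tCj; rewrite !inE eqxx.
by rewrite -coef_contr HW //= set_cons setU1K.
Qed.

Lemma governed_of_weights m C (b : tensor n m.+3) (D : {set 'I_n} -> 'I_n -> 'I_n -> 'F_2) :
  b \in Multi C m.+3 ->
  (forall t, t \in injTo m.+3 C ->
     coef t b = \sum_(x <- drop m.+1 t) D [set y in t] (thead t) x) ->
  (forall A, A \subset C -> #|A| = m.+3 -> exists w, pair_potential A (D A) w) ->
  governed C b.
Proof.
move=> bC Db potD; split=> //.
have /fin_all_exists[W HW] : forall A, exists w,
    A \subset C -> #|A| = m.+3 -> pair_potential A (D A) w.
  move=> A; have [AC|_] := boolP (A \subset C); last by exists (fun _ => 0).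
  have [cA|ncA] := #|A| =P m.+3; last by exists (fun _ => 0); move=> _ /ncA.
  by have [w] := potD A AC cA; exists w.
exists W => t tC; rewrite Db //; move: (tC); rewrite mem_injTo => /andP[ut tsC].
have AC : [set y in t] \subset C by apply/subsetP => y; rewrite inE => /(allP tsC).
have cA : #|[set y in t]| = m.+3 by rewrite cardsE (card_uniqP ut) size_tuple.
case/tupleP: t tC ut tsC AC cA => j r _ ut _ AC cA /=.
have [u [v uv]] := drop_last2 (size_tuple r).
have sub : subseq [:: j; u; v] (j :: r) by rewrite /= eqxx -uv drop_subseq.
rewrite uv !big_cons !big_nil !addr0; apply: HW => //; first exact: subseq_uniq sub ut.
by move=> y /(mem_subseq sub) yt; rewrite inE.
Qed.

Lemma governed_of_contr_cyclic C (b : tensor n 3) :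
  b \in Multi C 3 -> (forall j, j \in C -> governed (C :\ j) (contr b (e j))) ->
  (forall j1 j2 j3, b [tuple e j1; e j2; e j3] + b [tuple e j3; e j1; e j2]
                    + b [tuple e j2; e j3; e j1] = 0) ->
  governed C b.
Proof.
move=> bC gcontr cyc; have [D Db] := contr_governed_weights gcontr.
apply: (governed_of_weights bC Db) => A AC cA.
apply: pair_potential_card3 => [|//|j x y ujxy jxyA]; first exact: pchar_Fp.
have Dt (t : 3.-tuple 'I_n) : perm_eq t [:: j; x; y] ->
    coef t b = \sum_(z <- drop 1 t) D A (thead t) z.
  move=> tp; have tA : {subset t <= A} by move=> z; rewrite (perm_mem tp) => /jxyA.
  have ut : uniq t by rewrite (perm_uniq tp).
  rewrite Db ?(set_seq_card_eq ut tA) ?size_tuple // mem_injTo ut.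
  by apply/allP => z /tA /(subsetP AC).
have := cyc j x y; rewrite -!coef_triple !Dt //=.
- by rewrite !big_cons !big_nil !addr0.
- by rewrite (perm_rot 1 [:: j; x; y]).
- by rewrite (perm_rot 2 [:: j; x; y]).
Qed.

Lemma governed_of_contr_exchange k C (b : tensor n k.+4) :
  b \in Multi C k.+4 -> (forall j, j \in C -> governed (C :\ j) (contr b (e j))) ->
  (forall j1 j2, j1 \in C -> j2 \in C -> j1 != j2 ->
     contr (contr b (e j1)) (e j2) = contr (contr b (e j2)) (e j1)) ->
  governed C b.
Proof.
move=> bC gcontr swap; have [D Db] := contr_governed_weights gcontr.
apply: (governed_of_weights bC Db) => A AC cA.
apply: pair_potential_card_gt3 => [|//|j1 j2 x y]; first exact: pchar_Fp.
  by rewrite cA.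
move=> /andP[j1xy /andP[xy _]] /andP[j2xy _] sA.
move: j1xy j2xy xy; rewrite !inE !negb_or => /andP[j1x j1y] /andP[j2x j2y] xy.
have [<-//|j12] := eqVneq j1 j2.
have [j1A j2A xA yA] : [/\ j1 \in A, j2 \in A, x \in A & y \in A].
  by split; apply: sA; rewrite !inE eqxx ?orbT.
have cA12 : #|A :\ j1 :\ j2| = k.+2.
  move: cA; rewrite (cardsD1 j1) (cardsD1 j2 (A :\ j1)) j1A !inE j2A eq_sym j12.
  by rewrite !add1n => -[].
have [r [ur rA rxy]] : exists r : k.+2.-tuple 'I_n,
    [/\ uniq r, [set z in r] = A :\ j1 :\ j2 & drop k r = [:: x; y]].
  apply: tuple_of_set_ending => //; rewrite !inE ?xA ?yA ?andbT.
    by rewrite ![_ == j1]eq_sym ![_ == j2]eq_sym j1x j2x.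
  by rewrite ![_ == j1]eq_sym ![_ == j2]eq_sym j1y j2y.
have coefD (i1 i2 : 'I_n) : i1 \in A -> i2 \in A -> i1 != i2 ->
    [set z in r] = A :\ i1 :\ i2 ->
    coef [tuple of i1 :: [tuple of i2 :: r]] b = D A i1 x + D A i1 y.
  move=> i1A i2A i12 rAi; rewrite Db; last first.
    rewrite !cons_injTo (subsetP AC _ i1A) !inE eq_sym i12 (subsetP AC _ i2A) mem_injTo ur /=.
    apply/allP => z zr; have : z \in [set z in r] by rewrite inE.
    by rewrite rAi !inE => /and3P[-> -> /(subsetP AC)->].
  rewrite [drop _ _]/= theadE rxy !big_cons !big_nil !addr0.
  rewrite (set_cons i1 (i2 :: r)) set_cons rAi setD1K ?setD1K //.
  by rewrite !inE eq_sym i12.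
have rA' : [set z in r] = A :\ j2 :\ j1.
  by rewrite rA; apply/setP => z; rewrite !inE andbCA.
rewrite -(coefD j1 j2) // -(coefD j2 j1) 1?eq_sym //.
by rewrite -!coef_contr swap ?(subsetP AC).
Qed.

Lemma Cons1_governed C (b : tensor n 1) : Cons1 C b <-> governed C b.
Proof.
have -> : Cons1 C b <-> b \in Multi C 1.
  rewrite /Cons1 /Multi (@eq_span _ _ _ [seq elem h | h <- injTo 1 C]) //.
  move=> v; apply/mapP/mapP => [[x xC ->]|[h hC ->]].
    by exists [tuple x]; rewrite // mem_injTo /= andbT -mem_enum.
  case/tupleP: h hC => x h; rewrite tuple0 mem_injTo /= andbT => xC.
  by exists x; rewrite ?mem_enum //; congr elem; apply: val_inj.
split=> [bC|[] //]; split=> //; exists (fun _ y => coef [tuple y] b).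
case/tupleP => x t _; rewrite tuple0 big_seq1; congr coef; exact: val_inj.
Qed.

Lemma elem_pair x y (s1 s2 : V n) : elem [tuple x; y] [tuple s1; s2] = chi x s1 * chi y s2.
Proof. by rewrite ffunE !big_ord_recl big_ord0 mulr1. Qed.

Lemma Multi2_symmetric C (b : tensor n 2) : b \in Multi C 2 ->
  (forall s1 s2, b [tuple s1; s2] = b [tuple s2; s1]) <->
  (forall x y, coef [tuple x; y] b = coef [tuple y; x] b).
Proof.
move=> bC; split=> [sym x y|csym s1 s2]; first by rewrite !coef_pair sym.
have rev_tK : involutive (@rev_tuple 2 'I_n) by move=> t; apply: val_inj; exact: revK.
rewrite (Multi_expand bC) !sum_ffunE [RHS](reindex_inj (can_inj rev_tK)).
apply: eq_bigr; case/tupleP => x t; case/tupleP: t => y t; rewrite tuple0 => _.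
have -> : rev_tuple [tuple x; y] = [tuple y; x] by apply: val_inj.
by rewrite [LHS]ffunE [RHS]ffunE !elem_pair csym mulrC.
Qed.

Lemma Cons2_governed C (b : tensor n 2) : Cons2 C b <-> governed C b.
Proof.
split=> [[bC sym]|gb]; last first.
  split; first by case: gb.
  apply/(Multi2_symmetric gb.1) => x y; apply: (governed_coef_perm gb) => /=.
    by rewrite (perm_catC [:: x] [:: y]).
  by rewrite (perm_catC [:: x] [:: y]).
have csym := (Multi2_symmetric bC).1 sym; split=> //.
exists (fun A (z : 'I_n) => \sum_(w in A) (z < w)%:R * coef [tuple z; w] b).
case/tupleP => x t; case/tupleP: t => y t; rewrite tuple0 mem_injTo => /andP[uxy _].
have xy : x != y by case/andP: uxy; rewrite inE.
rewrite drop0 big_cons big_seq1 !big_set_seq //= !big_cons !big_nil !addr0 !ltnn !mul0r.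
rewrite add0r addr0; case: ltngtP => [_|_|/val_inj exy]; last by rewrite exy eqxx in xy.
  by rewrite mulr1n mulr0n mul1r mul0r addr0.
by rewrite mulr1n mulr0n mul1r mul0r add0r csym.
Qed.

Lemma Cons3_governed C (b : tensor n 3) : Cons3 C b <-> governed C b.
Proof.
split=> [[bC c2 cyc]|gb].
  by apply: governed_of_contr_cyclic => // j jC; apply/Cons2_governed/c2.
split; [by case: gb | by move=> j jC; apply/Cons2_governed/governed_contr|].
by move=> j1 j2 j3; apply: governed_cyclic gb.
Qed.

Lemma Cons4_governed k C (b : tensor n k.+4) : @Cons4 n k C b <-> governed C b.
Proof.
elim: k C b => [|k IH] C b /=; [move: Cons3_governed | move: IH] => prevP.
all: split=> [[bC cprev sw]|gb].
all: try by apply: governed_of_contr_exchange => // j jC; apply/prevP/cprev.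
all: split; [by case: gb | by move=> j jC; apply/prevP/governed_contr |].
all: by move=> j1 j2 _ _ _; apply: governed_swap gb.
Qed.

Lemma Consistent_governed i C (b : tensor n i) :
  (0 < i)%N -> @Consistent n C i b <-> governed C b.
Proof.
case: i b => [|[|[|[|k]]]] // b _.
- exact: Cons1_governed.
- exact: Cons2_governed.
- exact: Cons3_governed.
- exact: Cons4_governed.
Qed.

End Tensors.

Theorem proposition2p4 (n : nat) (i : nat) (B : {set 'I_n}) :
  (1 <= n)%N -> (1 <= i)%N ->
  forall b : tensor n i, @Consistent n B i b <-> b \in @Gov n B i.
Proof.
move=> _ i_gt0 b.
exact: iff_trans (Consistent_governed B b i_gt0) (iff_sym (Gov_governed B b)).
Qed.
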